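(* For every $\Gamma\subseteq\mathcal{L}_{\Box\!\!\rightarrow}$, we have $(\Gamma,\emptyset)\notin\mathsf{N4CK}$; i.e. every set of formulas of $\mathcal{L}_{\Box\!\!\rightarrow}$ is verified at some point of some Nelsonian conditional model.
   Context: Let $\mathcal{L}_{\Box\!\!\rightarrow}$ be the language built from propositional variables $p_0,p_1,\dots$ with binary $\wedge,\vee,\to$, unary strong negation $\sim$, and a binary would-conditional $\Box\!\!\rightarrow$. A Nelsonian conditional model is $\mathcal{M}=(W,\leq,R,V^+,V^-)$ where $W\neq\emptyset$, $\leq$ is a preorder on $W$, $V^+,V^-$ map each variable to a $\leq$-upward-closed subset of $W$, and $R\subseteq W\times(\mathcal{P}(W)\times\mathcal{P}(W))\times W$ (write $R_{(X,Y)}(w,v)$ for $(w,(X,Y),v)\in R$) satisfies for all $X,Y\subseteq W$: (c1) if $w\leq w'$ and $R_{(X,Y)}(w,v)$ then $R_{(X,Y)}(w',v')$ for some $v'\geq v$; (c2) if $R_{(X,Y)}(w,v)$ and $v\leq v'$ then $R_{(X,Y)}(w',v')$ for some $w'\geq w$. Verification $\models^+$ and falsification $\models^-$ are defined inductively: $w\models^\pm p$ iff $w\in V^\pm(p)$; $\wedge$: verified iff both conjuncts verified, falsified iff one is falsified; $\vee$: verified iff one disjunct verified, falsified iff both falsified; $w\models^+\sim\psi$ iff $w\models^-\psi$ and $w\models^-\sim\psi$ iff $w\models^+\psi$; $w\models^+\psi\to\chi$ iff for all $v\geq w$, $v\models^+\psi$ implies $v\models^+\chi$; $w\models^-\psi\to\chi$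 iff $w\models^+\psi$ and $w\models^-\chi$; $w\models^+\psi\Box\!\!\rightarrow\chi$ iff for all $v\geq w$ and all $u$ with $R_{\|\psi\|_\mathcal{M}}(v,u)$, $u\models^+\chi$; $w\models^-\psi\Box\!\!\rightarrow\chi$ iff some $u$ has $R_{\|\psi\|_\mathcal{M}}(w,u)$ and $u\models^-\chi$; here $\|\psi\|_\mathcal{M}=(\{w\mid w\models^+\psi\},\{w\mid w\models^-\psi\})$. $\mathsf{N4CK}$ is the set of pairs $(\Gamma,\Delta)$ of sets of formulas such that no pointed model verifies all members of $\Gamma$ while verifying no member of $\Delta$. *)

Inductive form : Type :=
  | Var  : nat -> form
  | And  : form -> form -> form
  | Or   : form -> form -> form
  | Imp  : form -> form -> form
  | SNeg : form -> form
  | Cond : form -> form -> form.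

Record model : Type := Model {
  W : Type;
  W_inhabited : inhabited W;
  le : W -> W -> Prop;
  le_refl : forall w, le w w;
  le_trans : forall u v w, le u v -> le v w -> le u w;
  R : (W -> Prop) * (W -> Prop) -> W -> W -> Prop;
  Vp : nat -> W -> Prop;
  Vn : nat -> W -> Prop;
  Vp_up : forall n w w', le w w' -> Vp n w -> Vp n w';
  Vn_up : forall n w w', le w w' -> Vn n w -> Vn n w';
  c1 : forall XY w w' v, le w w' -> R XY w v -> exists v', le v v' /\ R XY w' v';
  c2 : forall XY w v v', R XY w v -> le v v' -> exists w', le w w' /\ R XY w' v'
}.

(* eval M phi = (verification set, falsification set) = ||phi||_M *)
Fixpoint eval (M : model) (phi : form) : (W M -> Prop) * (W M -> Prop) :=
  match phi with
  | Var n => (Vp M n, Vn M n)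
  | And a b =>
      let (ap, an) := eval M a in let (bp, bn) := eval M b in
      (fun w => ap w /\ bp w, fun w => an w \/ bn w)
  | Or a b =>
      let (ap, an) := eval M a in let (bp, bn) := eval M b in
      (fun w => ap w \/ bp w, fun w => an w /\ bn w)
  | Imp a b =>
      let (ap, an) := eval M a in let (bp, bn) := eval M b in
      (fun w => forall v, le M w v -> ap v -> bp v, fun w => ap w /\ bn w)
  | SNeg a =>
      let (ap, an) := eval M a in (an, ap)
  | Cond a b =>
      let XY := eval M a in let (bp, bn) := eval M b in
      (fun w => forall v u, le M w v -> R M XY v u -> bp u,
       fun w => exists u, R M XY w u /\ bn u)
  end.

Definition verifies (M : model) (w : W M) (phi : form) : Prop := fst (eval M phi) w.
Definition falsifies (M : model) (w : W M) (phi : form) : Prop := snd (eval M phi) w.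

Definition N4CK (Gamma Delta : form -> Prop) : Prop :=
  forall (M : model) (w : W M),
    ~ ((forall phi, Gamma phi -> verifies M w phi) /\
       (forall psi, Delta psi -> ~ verifies M w psi)).


(* Strong negation is not explosive: in the one-point model whose order and
   conditional relations are total and whose valuations make every variable
   both verified and falsified, every formula is both verified and falsified
   by induction, so its single point verifies any set of formulas. *)

Definition full_model : model :=
  {| W := unit;
     W_inhabited := inhabits tt;
     le := fun _ _ => True;
     le_refl := fun _ => I;
     le_trans := fun _ _ _ _ _ => I;
     R := fun _ _ _ => True;
     Vp := fun _ _ => True;
     Vn := fun _ _ => True;
     Vp_up := fun _ _ _ _ _ => I;
     Vn_up := fun _ _ _ _ _ => I;
     c1 := fun _ _ _ v _ _ => ex_intro _ v (conj I I);
     c2 := fun _ w _ _ _ _ => ex_intro _ w (conj I I) |}.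

Lemma full_model_verifies_falsifies (phi : form) (w : W full_model) :
  verifies full_model w phi /\ falsifies full_model w phi.
Proof.
  unfold verifies, falsifies; revert w.
  induction phi as [n | a IHa b IHb | a IHa b IHb | a IHa b IHb | a IHa | a _ b IHb];
    intros w; simpl.
  - split; exact I.
  - destruct (eval full_model a) as [ap an], (eval full_model b) as [bp bn].
    simpl in *; destruct (IHa w), (IHb w); auto.
  - destruct (eval full_model a) as [ap an], (eval full_model b) as [bp bn].
    simpl in *; destruct (IHa w), (IHb w); auto.
  - destruct (eval full_model a) as [ap an], (eval full_model b) as [bp bn].
    simpl in *; split.
    + intros v _ _; apply (IHb v).
    + split; [apply (IHa w) | apply (IHb w)].
  - destruct (eval full_model a) as [ap an].
    simpl in *; destruct (IHa w); auto.
  - destruct (eval full_model b) as [bp bn].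
    simpl in *; split.
    + intros v u _ _; apply (IHb u).
    + exists w; split; [exact I | apply (IHb w)].
Qed.

Theorem proposition6 : forall Gamma : form -> Prop, ~ N4CK Gamma (fun _ => False).
Proof.
  intros Gamma HN4CK.
  apply (HN4CK full_model tt); split.
  - intros phi _; apply full_model_verifies_falsifies.
  - intros psi [].
Qed.
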